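(* Let $d\ge1$, let $G$ be an $\mathcal{R}_d$-independent graph and let $G'$ be obtained from $G$ by applying a $(d+1)$-dimensional $X$-replacement or a $(d+1)$-dimensional $V$-replacement. Then $G'$ is $\mathcal{R}_{d+1}$-independent.
   Context: For a graph $G=(V,E)$ and a generic $p:V\to\mathbb{R}^d$ (coordinates algebraically independent over $\mathbb{Q}$), the rigidity matrix has a row for each $uv\in E$ with $p(u)-p(v)$ in the $d$ columns of $u$, $p(v)-p(u)$ in those of $v$, zeros elsewhere; $\mathcal{R}_d$ is its row matroid, with rank $r_d$. A graph with edge set $F$ is $\mathcal{R}_d$-independent if $r_d(F)=|F|$. For an integer $D\ge1$: a $D$-dimensional $X$-replacement takes two non-adjacent (vertex-disjoint) edges $uv,xy$ of $G$, deletes them, and adds a new vertex $w$ of degree $D+2$ adjacent to $u,v,x,y$ (and $D-2$ further existing vertices). A $D$-dimensional $V$-replacement takes two adjacent edges $xy,yz$ of $G$, deletes them, and adds a new vertex $w$ of degree $D+2$ adjacent to $x,y,z$ (and $D-1$ further existing vertices). *)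

From HB Require Import structures.
From mathcomp Require Import all_boot all_order all_algebra.
From mathcomp Require Import reals.
From mathcomp Require Import mpoly.
Set Implicit Arguments. Unset Strict Implicit. Unset Printing Implicit Defensive.
Import Order.TTheory GRing.Theory Num.Theory.
Local Open Scope ring_scope.

Definition simple_graph (V : finType) (E : {set {set V}}) : Prop :=
  forall e, e \in E -> #|e| = 2%N.

Definition coords (R : realType) (V : finType) (d : nat) (p : V -> 'rV[R]_d)
  (i : 'I_#|{: V * 'I_d}|) : R :=
  let vk := enum_val i in p vk.1 ord0 vk.2.

Definition generic (R : realType) (V : finType) (d : nat) (p : V -> 'rV[R]_d) : Prop :=
  forall P : {mpoly rat[#|{: V * 'I_d}|]},
    P != 0 -> (map_mpoly (fun q : rat => ratr q : R) P).@[coords p] != 0.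

(* Row of the rigidity matrix for the edge e = {u,v}: p(u)-p(v) in the
   columns of u, p(v)-p(u) in those of v, 0 elsewhere.  Rows live in
   {ffun V -> 'rV[R]_d} (the d columns of each vertex). *)
Definition rig_row (R : realType) (V : finType) (d : nat) (p : V -> 'rV[R]_d)
  (e : {set V}) : {ffun V -> 'rV[R]_d} :=
  [ffun w => if w \in e then \sum_(x in e) (p w - p x) else 0].

Definition Rd_independent (R : realType) (d : nat) (V : finType)
  (E : {set {set V}}) : Prop :=
  forall p : V -> 'rV[R]_d, generic p -> free (map (rig_row p) (enum E)).

(* Edges of G viewed in the graph with one extra vertex None. *)
Definition lift_edges (V : finType) (E : {set {set V}}) : {set {set option V}} :=
  [set [set Some x | x in e] | e : {set V} in E].

Definition star_edges (V : finType) (N : {set V}) : {set {set option V}} :=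
  [set [set None; Some z] | z in N].

Definition X_replacement (D : nat) (V : finType) (E : {set {set V}})
  (E' : {set {set option V}}) : Prop :=
  exists (u v x y : V) (N : {set V}),
    [/\ uniq [:: u; v; x; y], [set u; v] \in E, [set x; y] \in E,
        [/\ #|N| = (D + 2)%N, u \in N, v \in N, x \in N & y \in N] &
        E' = lift_edges (E :\ [set u; v] :\ [set x; y]) :|: star_edges N].

Definition V_replacement (D : nat) (V : finType) (E : {set {set V}})
  (E' : {set {set option V}}) : Prop :=
  exists (x y z : V) (N : {set V}),
    [/\ uniq [:: x; y; z], [set x; y] \in E, [set y; z] \in E,
        [/\ #|N| = (D + 2)%N, x \in N, y \in N & z \in N] &
        E' = lift_edges (E :\ [set x; y] :\ [set y; z]) :|: star_edges N].

From HB Require Import structures.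
From mathcomp Require Import all_boot all_order all_algebra.
From mathcomp Require Import reals.
From mathcomp Require Import mpoly.
Set Implicit Arguments. Unset Strict Implicit. Unset Printing Implicit Defensive.
Import GRing.Theory.
Local Open Scope ring_scope.

(* G' is a subgraph of the cone of G, i.e. of G together with a new vertex
   joined to every vertex, and the cone of an R_d-independent graph is
   R_(d+1)-independent (Whiteley's coning lemma).

   For the coning lemma one realization with independent rows suffices: a
   nonzero maximal minor of the rigidity matrix there is a nonzero rational
   polynomial in the coordinates, hence nonzero at a generic point.  Put the
   cone vertex at the origin and every other vertex v at (b v, 1), with b the
   generic realization in R^d read off the first d coordinates of the given
   one.  The last coordinate column of v then only meets the cone edge at v,
   and on the first d coordinates the lifted edges of G reproduce the rigidity
   matrix of G at b. *)

Lemma free_enumP (K : fieldType) (W : vectType K) (T : finType) (f : T -> W)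
    (S : {set T}) :
  reflect (forall k : T -> K, \sum_(e in S) k e *: f e = 0 -> {in S, forall e, k e = 0})
          (free (map f (enum S))).
Proof.
have nth_fS (i : 'I_#|S|) : (map f (enum S))`_i = f (enum_val i).
  by rewrite (nth_map (enum_val i)) -?cardE // -enum_val_nth.
pose X := map_tuple f (enum_tuple S).
apply: (iffP (@freeP _ _ _ X)) => [freeS k kS0 e eS | freeS k kS0 i].
- rewrite -(enum_rankK_in eS eS); apply: (freeS (k \o enum_val)).
  by rewrite -[RHS]kS0 (big_enum_val (A := mem S)); apply: eq_bigr => i _; rewrite nth_fS.
- pose h := enum_rank_in (enum_valP i).
  rewrite -(enum_valK_in (enum_valP i) i); apply: (freeS (k \o h)) (enum_valP _).
  rewrite -[RHS]kS0 (big_enum_val (A := mem S)); apply: eq_bigr => j _.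
  by rewrite /= /h enum_valK_in nth_fS.
Qed.

Lemma free_enum_subset (K : fieldType) (W : vectType K) (T : finType) (f : T -> W)
    (S S' : {set T}) :
  S' \subset S -> free (map f (enum S)) -> free (map f (enum S')).
Proof.
move=> sS'S /free_enumP freeS; apply/free_enumP => k kS'0 e eS'.
pose k' e := if e \in S' then k e else 0.
have := freeS k' _ e (subsetP sS'S e eS'); rewrite /k' eS'; apply.
rewrite (big_setID S') /= (setIidPr sS'S) [X in _ + X]big1 ?addr0; last first.
  by move=> x /setDP[_ /negPf ->]; rewrite scale0r.
by rewrite -[RHS]kS'0; apply: eq_bigr => x ->.
Qed.

Lemma row_free_map_mx (S : comNzRingType) (F0 F : fieldType)
    (f0 : {rmorphism S -> F0}) (f : {rmorphism S -> F}) m n (A : 'M[S]_(m, n)) :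
  (forall x, f x = 0 -> f0 x = 0) ->
  row_free (map_mx f0 A) -> row_free (map_mx f A).
Proof.
move=> ker_f rf0.
have full0 : row_full (map_mx f0 A)^T by rewrite /row_full mxrank_tr.
pose g := fullrankfun full0.
have minor_unit (F' : fieldType) (h : {rmorphism S -> F'}) :
    (colsub g (map_mx h A) \in unitmx) = (h (\det (colsub g A)) != 0).
  by rewrite unitmxE unitfE -det_map_mx map_mxsub.
have : colsub g (map_mx f A) \in unitmx.
  rewrite minor_unit; apply: contraTneq (fullrowsub_unit full0) => /ker_f.
  by rewrite -trmx_mxsub unitmx_tr minor_unit => ->; rewrite eqxx.
rewrite -row_free_unit => rf; apply: inj_row_free => v v0.
apply/eqP; rewrite -(mulmx_free_eq0 _ rf) mulmx_colsub v0.
by apply/eqP/matrixP => i j; rewrite !mxE.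
Qed.

Lemma comp_mpolyA (K : comNzRingType) (n k l : nat) (P : {mpoly K[n]})
    (lq : n.-tuple {mpoly K[k]}) (lr : k.-tuple {mpoly K[l]}) :
  (P \mPo lq) \mPo lr = P \mPo [tuple tnth lq i \mPo lr | i < n].
Proof.
rewrite [P \mPo lq]comp_mpolyEX [in RHS]comp_mpolyEX raddf_sum /=.
apply: eq_bigr => m _; rewrite comp_mpolyZ !comp_mpolyX rmorph_prod.
by congr (_ *: _); apply: eq_bigr => i _; rewrite rmorphXn tnth_mktuple.
Qed.

Lemma generic_sub (R : realType) (V W : finType) (n m : nat)
    (p : V -> 'rV[R]_n) (q : W -> 'rV[R]_m)
    (sigma : 'I_#|{: W * 'I_m}| -> 'I_#|{: V * 'I_n}|) :
  injective sigma -> (forall i, coords q i = coords p (sigma i)) ->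
  generic p -> generic q.
Proof.
move=> sigma_inj coords_q gp P P0.
pose lq := [tuple ('X_(sigma i) : {mpoly rat[#|{: V * 'I_n}|]}) | i < #|{: W * 'I_m}|].
pose lr := [tuple (if [pick i | sigma i == j] is Some i then 'X_i else 0 : {mpoly rat[_]})
           | j < #|{: V * 'I_n}|].
have lqK : (P \mPo lq) \mPo lr = P.
  rewrite comp_mpolyA -[RHS]comp_mpoly_id; congr (P \mPo _).
  apply: eq_from_tnth => i; rewrite !tnth_mktuple comp_mpolyXU -tnth_nth tnth_mktuple.
  by case: pickP => [j /eqP/sigma_inj -> // | /(_ i)]; rewrite eqxx.
have /gp : P \mPo lq != 0.
  by apply: contraNneq P0 => lq0; rewrite -lqK lq0 comp_mpoly0.
rewrite (map_mpoly_comp _ _ (fmorph_inj _)) comp_mpoly_meval.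
congr (_ != 0); apply: meval_eq => i.
by rewrite tnth_map tnth_mktuple map_mpolyX mevalXU coords_q.
Qed.

Definition drop_last_coord (R : realType) (V : finType) (d : nat)
    (p : option V -> 'rV[R]_d.+1) (z : V) : 'rV[R]_d :=
  \row_c p (Some z) ord0 (lift ord_max c).

Lemma generic_drop_last_coord (R : realType) (V : finType) (d : nat)
    (p : option V -> 'rV[R]_d.+1) :
  generic p -> generic (drop_last_coord p).
Proof.
apply: (@generic_sub _ _ _ _ _ _ _
  (fun i => enum_rank (Some (enum_val i).1, lift ord_max (enum_val i).2))).
- move=> i j /enum_rank_inj eq_ij; apply: enum_val_inj.
  have /= [zE] := congr1 fst eq_ij.
  have /= /lift_inj cE := congr1 snd eq_ij.
  by rewrite [LHS]surjective_pairing zE cE -surjective_pairing.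
- by move=> i; rewrite /coords enum_rankK /= mxE.
Qed.

Section RigidityMatrix.
Variables (R : realType) (V : finType) (D : nat).
Local Notation N := #|{: V * 'I_D}|.

Lemma sum_ffun_rowE (I : finType) (A : {pred I}) (k : I -> R)
    (F : I -> {ffun V -> 'rV[R]_D}) w c :
  (\sum_(i in A) k i *: F i) w ord0 c = \sum_(i in A) k i * F i w ord0 c.
Proof. by rewrite sum_ffunE summxE; apply: eq_bigr => i _; rewrite !ffunE !mxE. Qed.

Definition rigidity_mx (q : V -> 'rV[R]_D) (s : seq {set V}) : 'M[R]_(size s, N) :=
  \matrix_(i, j) rig_row q (nth set0 s i) (enum_val j).1 ord0 (enum_val j).2.

Lemma mul_rigidity_mx q s (v : 'rV[R]_(size s)) w c :
  (v *m rigidity_mx q s) ord0 (enum_rank (w, c)) =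
  (\sum_(i < size s) v ord0 i *: rig_row q (nth set0 s i)) w ord0 c.
Proof.
by rewrite sum_ffun_rowE !mxE; apply: eq_bigr => i _; rewrite mxE enum_rankK.
Qed.

Lemma free_rig_rowsE q s : free (map (rig_row q) s) = row_free (rigidity_mx q s).
Proof.
pose X := map_tuple (rig_row q) (in_tuple s).
have XE (k : 'I_(size s) -> R) :
    \sum_(i < size s) k i *: X`_i = \sum_(i < size s) k i *: rig_row q (nth set0 s i).
  by apply: eq_bigr => i _; rewrite (nth_map set0).
apply/(@freeP _ _ _ X)/idP => [freeX | rfree k].
- apply: inj_row_free => v v0; apply/rowP => i; rewrite mxE.
  apply: (freeX (v ord0)); rewrite XE; apply/ffunP => w; apply/rowP => c.
  by rewrite -mul_rigidity_mx v0 !ffunE !mxE.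
- rewrite XE => k0 i.
  have : (\row_i k i) *m rigidity_mx q s = 0.
    apply/rowP => j; rewrite -[j]enum_valK [enum_val j]surjective_pairing.
    rewrite mul_rigidity_mx (eq_bigr (fun i => k i *: rig_row q (nth set0 s i))).
      by rewrite k0 !ffunE !mxE.
    by move=> l _; rewrite mxE.
  by move/eqP; rewrite mulmx_free_eq0 // => /eqP/rowP/(_ i); rewrite !mxE.
Qed.

Definition sym_rigidity_mx (s : seq {set V}) : 'M[{mpoly rat[N]}]_(size s, N) :=
  \matrix_(i, j)
    let e := nth set0 s i in
    if (enum_val j).1 \in e then
      \sum_(x in e) ('X_j - 'X_(enum_rank (x, (enum_val j).2)))
    else 0.

Definition eval_at (q : V -> 'rV[R]_D) : {rmorphism {mpoly rat[N]} -> R} :=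
  meval (coords q) \o map_mpoly ratr.

Lemma sym_rigidity_mxE q s :
  map_mx (eval_at q) (sym_rigidity_mx s) = rigidity_mx q s.
Proof.
apply/matrixP => i j; rewrite !mxE /rig_row ffunE.
case: ifP => _; last by rewrite rmorph0 mxE.
rewrite summxE rmorph_sum; apply: eq_bigr => x _.
by rewrite rmorphB /= !map_mpolyX !mevalXU /coords enum_rankK !mxE.
Qed.

Lemma free_rig_rows_generic (q0 q : V -> 'rV[R]_D) s :
  generic q -> free (map (rig_row q0) s) -> free (map (rig_row q) s).
Proof.
rewrite !free_rig_rowsE -!sym_rigidity_mxE => gq.
apply: row_free_map_mx => P; have [-> _|/gq/eqP//] := eqVneq P 0.
exact: rmorph0.
Qed.

End RigidityMatrix.

Lemma Rd_independent_subset (R : realType) (d : nat) (V : finType)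
    (E F : {set {set V}}) :
  F \subset E -> Rd_independent R d E -> Rd_independent R d F.
Proof. by move=> sFE indepE p gp; apply: free_enum_subset sFE (indepE p gp). Qed.

Definition cone_edges (V : finType) (E : {set {set V}}) : {set {set option V}} :=
  lift_edges E :|: star_edges [set: V].

Section Coning.
Variables (R : realType) (V : finType) (d : nat).

Definition cone_realization (b : V -> 'rV[R]_d) (o : option V) : 'rV[R]_d.+1 :=
  if o is Some z then \row_c (if unlift ord_max c is Some c' then b z ord0 c' else 1)
  else 0.

Lemma rig_row_lift (D : nat) (p : option V -> 'rV[R]_D) (f : {set V}) z :
  rig_row p [set Some x | x in f] (Some z) = rig_row (fun x => p (Some x)) f z.
Proof.
rewrite /rig_row !ffunE mem_imset; last exact: Some_inj.
by case: ifP => // _; rewrite big_imset //; move=> ? ? _ _ [].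
Qed.

Lemma rig_row_star (D : nat) (p : option V -> 'rV[R]_D) (z w : V) :
  rig_row p [set None; Some z] (Some w) = if w == z then p (Some z) - p None else 0.
Proof.
rewrite /rig_row !ffunE !inE /= (inj_eq Some_inj).
by case: eqP => // ->; rewrite big_setU1 ?inE //= big_set1 subrr addr0.
Qed.

Lemma cone_rig_row_lift (b : V -> 'rV[R]_d) (f : {set V}) z c :
  rig_row (cone_realization b) [set Some x | x in f] (Some z) ord0 c =
  if unlift ord_max c is Some c' then rig_row b f z ord0 c' else 0.
Proof.
rewrite rig_row_lift /rig_row !ffunE.
case: unliftP => [c' ->|->]; rewrite ?liftK ?unlift_none; case: ifP => _;
  rewrite ?mxE // !summxE.
- by apply: eq_bigr => x _; rewrite !mxE liftK.
- by apply: big1 => x _; rewrite !mxE unlift_none subrr.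
Qed.

Lemma cone_rig_row_star (b : V -> 'rV[R]_d) (z w : V) :
  rig_row (cone_realization b) [set None; Some z] (Some w) ord0 ord_max = (w == z)%:R.
Proof.
by rewrite rig_row_star; case: eqP => _; rewrite !mxE ?unlift_none ?subr0.
Qed.

Lemma free_cone_realization (b : V -> 'rV[R]_d) (E : {set {set V}}) :
  free (map (rig_row b) (enum E)) ->
  free (map (rig_row (cone_realization b)) (enum (cone_edges E))).
Proof.
move=> /free_enumP freeE; apply/free_enumP => k.
have lift_inj : injective (fun f : {set V} => [set Some x | x in f]).
  exact: imset_inj Some_inj.
have star_inj : injective (fun z : V => [set None; Some z]).
  by move=> z w /setP/(_ (Some z)); rewrite !inE eqxx /= => /esym/eqP[].
have disj : [disjoint lift_edges E & star_edges [set: V]].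
  rewrite disjoints_subset; apply/subsetP => _ /imsetP[f _ ->]; rewrite inE.
  by apply/imsetP => -[z _ /setP/(_ None)]; rewrite !inE eqxx /= => /imsetP[].
rewrite /cone_edges (eq_bigl [predU lift_edges E & star_edges [set: V]]) => [k0|e];
  last by rewrite !inE.
rewrite bigU // !big_imset /= in k0; last 2 first.
- by move=> ? ? _ _ /star_inj.
- by move=> ? ? _ _ /lift_inj.
have k0_at z c := congr1 (fun g : {ffun option V -> 'rV[R]_d.+1} => g (Some z) ord0 c) k0.
have kstar z : k [set None; Some z] = 0.
  have := k0_at z ord_max; rewrite /= ffunE mxE !sum_ffun_rowE big1 => [|f _]; last first.
    by rewrite cone_rig_row_lift unlift_none mulr0.
  rewrite add0r (bigD1 z) //= big1 => [|w /andP[_ /negPf wz]]; last first.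
    by rewrite cone_rig_row_star eq_sym wz mulr0.
  by rewrite cone_rig_row_star eqxx mulr1 addr0 ffunE mxE.
have klift : {in E, forall f : {set V}, k [set Some x | x in f] = 0}.
  apply: freeE; apply/ffunP => z; apply/rowP => c.
  have := k0_at z (lift ord_max c).
  rewrite /= [X in _ + X]big1 => [|w _]; last by rewrite kstar scale0r.
  rewrite addr0 !sum_ffun_rowE !ffunE !mxE => lift0; rewrite -[RHS]lift0.
  by apply: eq_bigr => f _; rewrite cone_rig_row_lift liftK.
by move=> e /setUP[/imsetP[f fE ->] | /imsetP[z _ ->]]; [apply: klift | apply: kstar].
Qed.

End Coning.

Lemma Rd_independent_cone (R : realType) (d : nat) (V : finType) (E : {set {set V}}) :
  Rd_independent R d E -> Rd_independent R d.+1 (cone_edges E).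
Proof.
move=> indepE p gp.
apply: (free_rig_rows_generic (q0 := cone_realization (drop_last_coord p)) gp).
exact/free_cone_realization/indepE/generic_drop_last_coord.
Qed.

Lemma replacement_sub_cone (D : nat) (V : finType) (E : {set {set V}})
    (E' : {set {set option V}}) :
  X_replacement D E E' \/ V_replacement D E E' -> E' \subset cone_edges E.
Proof.
by case=> [[u [v [x [y [N [_ _ _ _ ->]]]]]] | [x [y [z [N [_ _ _ _ ->]]]]]];
  apply: setUSS; apply: imsetS; rewrite ?subsetT //;
  exact: subset_trans (subD1set _ _) (subD1set _ _).
Qed.

Theorem corollary4p18 (R : realType) (d : nat) (V : finType)
  (E : {set {set V}}) (E' : {set {set option V}}) :
  (1 <= d)%N ->
  simple_graph E ->
  Rd_independent R d E ->
  X_replacement d.+1 E E' \/ V_replacement d.+1 E E' ->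
  Rd_independent R d.+1 E'.
Proof.
move=> _ _ indepE /replacement_sub_cone sE'.
exact: Rd_independent_subset sE' (Rd_independent_cone indepE).
Qed.
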